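(* Let \(G=(V,E)\) be a connected split graph with clique \(C\) and independent set \(I\), and let \(T\) be a spanning tree of \(G\). Let \(X\) be any one of the searches MNS, MCS, LDFS, LBFS. Then \(T\) is the \(\mathcal{L}\)-tree of some \(X\) ordering of \(G\) if and only if there exist a partition \(V=L\cup V(P)\) and a path \(P=(v_1,\dots,v_k)\) in \(T\) such that: (1) \(T\) is a caterpillar tree consisting of the set of leaves \(L\) and the dominating path \(P\), and \(P\) contains every vertex of \(C\); (2) for every leaf \(w\in L\) whose neighbor in \(T\) is \(v_i\), we have \(wv_j\notin E\) for all \(j>i\); (3) for every \(v_i\in I\cap V(P)\), with \(l:=|\{v_1,\dots,v_{i-1}\}\cap C|\): (a) \(\{v_1,\dots,v_{i-1}\}\cap C\subseteq N(v_i)\), and (b) \(\{v_{i+1},\dots,v_{i+\deg(v_i)-l}\}\subseteq N(v_i)\).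
   Context: A split graph is a graph whose vertex set can be partitioned into a clique \(C\) and an independent set \(I\). A tree is a caterpillar if it has a dominating path, i.e., a path such that every vertex is on it or adjacent to a vertex on it. \(\deg(v)=|N(v)|\) in \(G\). With \(n=|V|\): an LBFS ordering is produced by starting with label \((n)\) on a start vertex \(s\), empty labels elsewhere, and for \(i=1,\dots,n\) picking an unnumbered vertex of lexicographically largest label as \(v_i\) and appending \(n-i\) to the labels of its unnumbered neighbors. An LDFS ordering is produced similarly with \(s\) labelled \((0)\), others empty, and prepending \(i\) instead. An MCS ordering is produced by repeatedly choosing an unnumbered vertex with the most numbered neighbors. An MNS ordering uses set labels: all \(\emptyset\), \(s\) gets \(\{n+1\}\); repeatedly pick an unnumbered vertex with inclusion-maximal label as \(v_i\) and add \(i\) to the labels of its unnumbered neighbors. Ties are broken arbitrarily. The \(\mathcal{L}\)-tree of an ordering \(\sigma=(u_1,\dots,u_n)\) is the tree on \(V\) containing, for each \(i\ge2\), the edge from \(u_i\) to its rightmost neighbor \(u_j\) with \(j<i\). *)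

From mathcomp Require Import all_boot.
Set Implicit Arguments. Unset Strict Implicit. Unset Printing Implicit Defensive.

Section Graphs.
Variable V : finType.

Definition simple_graph (e : rel V) : Prop :=
  (forall x y, e x y = e y x) /\ (forall x, ~~ e x x).

Definition connected (e : rel V) : Prop :=
  0 < #|V| /\ forall x y, connect e x y.

Definition split_partition (e : rel V) (C I : {set V}) : Prop :=
  C :&: I = set0 /\ C :|: I = setT /\
  (forall x y, x \in C -> y \in C -> x != y -> e x y) /\
  (forall x y, x \in I -> y \in I -> ~~ e x y).

Definition acyclic (t : rel V) : Prop :=
  forall c : seq V, uniq c -> 3 <= size c -> ~~ cycle t c.

Definition spanning_tree (e t : rel V) : Prop :=
  simple_graph t /\ (forall x y, t x y -> e x y) /\
  (forall x y, connect t x y) /\ acyclic t.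

Definition deg (e : rel V) (v : V) : nat := #|[set y | e v y]|.

Definition is_vertex_ordering (s : seq V) : bool := uniq s && (size s == #|V|).

Fixpoint lex_le (a b : seq nat) : bool :=
  match a, b with
  | [::], _ => true
  | _ :: _, [::] => false
  | x :: a', y :: b' => (x < y) || ((x == y) && lex_le a' b')
  end.
Definition lex_lt (a b : seq nat) : bool := lex_le a b && (a != b).

(* Labels of an unnumbered vertex v once the prefix s (numbered vertices, in
   order, s = (v_1,...,v_(size s))) has been numbered.  Position j (0-based)
   in s corresponds to the number j.+1.  The start vertex's special label is
   irrelevant after step 1, so step 1 is an arbitrary choice of start vertex. *)
Definition lbfs_label (e : rel V) (s : seq V) (v : V) : seq nat :=
  (* appending n - i for i = 1, 2, ... *)
  [seq #|V| - j.+1 | j <- iota 0 (size s) & e (nth v s j) v].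
Definition ldfs_label (e : rel V) (s : seq V) (v : V) : seq nat :=
  (* prepending i for i = 1, 2, ... *)
  rev [seq j.+1 | j <- iota 0 (size s) & e (nth v s j) v].
Definition mcs_label (e : rel V) (s : seq V) (v : V) : nat :=
  count (fun u => e u v) s.
Definition mns_label (e : rel V) (s : seq V) (v : V) : seq nat :=
  [seq j.+1 | j <- iota 0 (size s) & e (nth v s j) v].
Definition proper_sub (a b : seq nat) : bool :=
  all (fun x => x \in b) a && ~~ all (fun x => x \in a) b.

Definition search_ordering (L : Type) (lab : seq V -> V -> L)
  (lt : L -> L -> bool) (sigma : seq V) : Prop :=
  is_vertex_ordering sigma /\
  forall i, 0 < i < size sigma ->
    forall u, u \in drop i sigma ->
      ~~ lt (lab (take i sigma) (nth u sigma i)) (lab (take i sigma) u).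

Inductive search := MNS | MCS | LDFS | LBFS.

Definition is_search_ordering (e : rel V) (X : search) (sigma : seq V) : Prop :=
  match X with
  | MNS => search_ordering (mns_label e) proper_sub sigma
  | MCS => search_ordering (mcs_label e) (fun a b => a < b) sigma
  | LDFS => search_ordering (ldfs_label e) lex_lt sigma
  | LBFS => search_ordering (lbfs_label e) lex_lt sigma
  end.

Definition ltree_parent (e : rel V) (sigma : seq V) (x : V) : option V :=
  ohead (rev [seq y <- take (index x sigma) sigma | e x y]).

Definition ltree (e : rel V) (sigma : seq V) : rel V :=
  fun x y => (ltree_parent e sigma x == Some y) || (ltree_parent e sigma y == Some x).

Definition is_path (t : rel V) (P : seq V) : bool :=
  if P is x :: P' then uniq P && path t x P' else false.
End Graphs.

(* All four searches choose, at every step, a vertex that no unnumbered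
   vertex strictly dominates on the numbered vertices.  On a connected split
   graph this pins the ordering down: every vertex but the first has an earlier neighbour, an independent
   vertex b is adjacent to every vertex before b that is adjacent to a clique
   vertex after b, and between an independent vertex and a later neighbour of
   it there are only clique vertices adjacent to it.  So the vertices that are
   first, in C, or have a later neighbour are consecutive in the L-tree and form
   the path P, every other vertex is an independent leaf hanging from its
   rightmost earlier neighbour, and (2), (3) follow.  Conversely, numbering P
   first and then the leaves greedily gives a search ordering with L-tree T:
   condition (3) is what prevents the next vertex of P from being dominated,
   and leaves are pairwise non-adjacent, so their labels only depend on P. *)

From Pilot Require Import Defs.
From mathcomp Require Import all_boot zify.
Set Implicit Arguments.
Unset Strict Implicit.
Unset Printing Implicit Defensive.

Lemma lex_le_anti a b : lex_le a b -> lex_le b a -> a = b.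
Proof.
elim: a b => [|x a IH] [|y b] //=.
case/orP=> [lxy|/andP[/eqP exy h1]] /orP[lyx|/andP[/eqP eyx h2]]; try lia.
by rewrite exy (IH b h1 h2).
Qed.

Lemma lex_le_trans b a c : lex_le a b -> lex_le b c -> lex_le a c.
Proof.
elim: a b c => [|x a IH] [|y b] [|z c] //=.
case/orP=> [lxy|/andP[/eqP -> h1]] /orP[lyz|/andP[/eqP <- h2]].
- by rewrite (ltn_trans lxy lyz).
- by rewrite lxy.
- by rewrite lyz.
- by rewrite eqxx (IH _ _ h1 h2) orbT.
Qed.

Lemma lex_lt_irr : irreflexive lex_lt.
Proof. by move=> a; rewrite /lex_lt eqxx andbF. Qed.

Lemma lex_lt_trans : transitive lex_lt.
Proof.
move=> b a c /andP[ab nab] /andP[bc nbc]; rewrite /lex_lt (lex_le_trans ab bc).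
by apply: contra nbc => /eqP eac; rewrite -(lex_le_anti bc) -?eac.
Qed.

(* LBFS and LDFS labels are strictly decreasing sequences. *)
Lemma subset_lex_le a b :
  sorted gtn a -> sorted gtn b -> {subset b <= a} -> lex_le b a.
Proof.
elim: a b => [|x a IH] [|y b] //=.
  by move=> _ _ /(_ y (mem_head _ _)).
move=> pa pb sub.
have allx : all (gtn x) a by apply: order_path_min pa => ? ? ?; lia.
have ally : all (gtn y) b by apply: order_path_min pb => ? ? ?; lia.
have : y <= x.
  have /predU1P[-> //|ya] := sub y (mem_head _ _).
  by have := allP allx y ya => /=; lia.
rewrite leq_eqVlt => /orP[/eqP eyx|->//]; rewrite eyx eqxx ltnn /=.
apply: IH (path_sorted pa) (path_sorted pb) _ => z zb.
have /predU1P[ezx|//] : z \in x :: a by apply: sub; rewrite inE zb orbT.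
by have := allP ally z zb => /=; lia.
Qed.

Lemma subset_lex_ltN a b :
  sorted gtn a -> sorted gtn b -> {subset b <= a} -> ~~ lex_lt a b.
Proof.
move=> sa sb sub; apply/andP => -[ab].
by rewrite (lex_le_anti ab (subset_lex_le sa sb sub)) eqxx.
Qed.

Lemma proper_subset_lex_lt a b x : sorted gtn a -> sorted gtn b ->
  {subset a <= b} -> x \in b -> x \notin a -> lex_lt a b.
Proof.
move=> sa sb sub xb xa; rewrite /lex_lt (subset_lex_le sb sa sub).
by apply: contraNneq xa => ->.
Qed.

Lemma mem_drop_index (T : eqType) (s : seq T) k y : uniq s -> y \in s ->
  (y \in drop k s) = (k <= index y s).
Proof.
move=> us ys; have := us; rewrite -{1}(cat_take_drop k s) cat_uniq.
case/and3P=> _ /hasPn dis _; have := ys.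
rewrite -{1}(cat_take_drop k s) mem_cat (in_take _ ys) [k <= _]leqNgt.
case: ltnP => [yk _|_ /orP[//|-> //]].
by apply/negbTE/negP => /dis; rewrite (in_take _ ys) yk.
Qed.

Lemma index_drop (T : eqType) (s : seq T) k y :
  k <= index y s -> index y (drop k s) = index y s - k.
Proof.
move=> ky; have yt : y \notin take k s.
  by apply: contraTN ky => /index_ltn; rewrite -ltnNge.
rewrite -{2}(cat_take_drop k s) index_cat (negbTE yt) size_takel ?addKn //.
exact: leq_trans ky (index_size _ _).
Qed.

Section KeySorted.
Variables (T : eqType) (f : T -> nat) (s : seq T).
Hypothesis s_sorted : sorted (fun a b => f a < f b) s.

Lemma key_sorted_uniq : uniq s.
Proof.
apply: sorted_uniq s_sorted; first by move=> ? ? ?; apply: ltn_trans.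
by move=> a; rewrite ltnn.
Qed.

Lemma key_ltn_nth x0 i j : i < size s -> j < size s ->
  (f (nth x0 s i) < f (nth x0 s j)) = (i < j).
Proof.
have tr : transitive (fun a b => f a < f b) by move=> ? ? ?; apply: ltn_trans.
have mono := sorted_ltn_nth tr x0 s_sorted.
move=> hi hj; case: (ltngtP i j) => [lt_ij|lt_ji|->]; last by rewrite ltnn.
- exact: mono.
- by apply/negbTE; rewrite -leqNgt ltnW //; apply: mono.
Qed.

Lemma key_ltn_index x y : x \in s -> y \in s ->
  (f x < f y) = (index x s < index y s).
Proof.
move=> xs ys; rewrite -{1}(nth_index x xs) -{1}(nth_index x ys).
by rewrite key_ltn_nth ?index_mem.
Qed.

Lemma key_nth_gap x0 k z : k.+1 < size s -> z \in s ->
  f (nth x0 s k) < f z -> f z < f (nth x0 s k.+1) -> False.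
Proof.
move=> hk zs; rewrite -(nth_index x0 zs) !key_ltn_nth ?index_mem //; last first.
  exact: ltnW.
lia.
Qed.

End KeySorted.

Section Greedy.
Variables (T : eqType) (L : Type) (f : T -> L) (lt : rel L).
Hypotheses (lt_irr : irreflexive lt) (lt_trans : transitive lt).

Lemma exists_maximal (l : seq T) : l != [::] ->
  exists2 m, m \in l & forall y, y \in l -> ~~ lt (f m) (f y).
Proof.
elim: l => [//|x l IH] _; have [->|/IH[m ml mmax]] := eqVneq l [::].
  by exists x => [|y]; rewrite ?mem_head // inE => /eqP ->; rewrite lt_irr.
case lmx: (lt (f m) (f x)).
- exists x => [|y]; first exact: mem_head.
  case/predU1P=> [->|yl]; first by rewrite lt_irr.
  by apply: contra (mmax y yl); apply: lt_trans.
- exists m => [|y]; first by rewrite inE ml orbT.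
  by case/predU1P=> [->|yl]; [rewrite lmx | apply: mmax].
Qed.

Lemma exists_greedy_order (l : seq T) :
  exists2 l', perm_eq l l' &
    forall i, i < size l' -> forall u, u \in drop i l' -> ~~ lt (f (nth u l' i)) (f u).
Proof.
have [n] := ubnP (size l); elim: n l => // n IH l; rewrite ltnS => hl.
have [->|/exists_maximal[m ml mmax]] := eqVneq l [::]; first by exists [::].
have [|l' pl' l'_greedy] := IH (rem m l); first by rewrite size_rem //; case: (l) ml hl.
exists (m :: l'); first by apply: perm_trans (perm_to_rem ml) _; rewrite perm_cons.
case=> [|i] hi u /=; last exact: l'_greedy.
by move=> ul; apply: mmax; rewrite (perm_mem (perm_to_rem ml)) inE (perm_mem pl').
Qed.

End Greedy.

Section SearchRules.
Variables (V : finType) (e : rel V).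

Definition nbr_positions (s : seq V) (v : V) : seq nat :=
  [seq j <- iota 0 (size s) | e (nth v s j) v].

Definition nbr_sub_in (s : seq V) (u w : V) : Prop :=
  forall x, x \in s -> e x u -> e x w.

Definition nbr_proper_in (s : seq V) (u w : V) : Prop :=
  nbr_sub_in s u w /\ exists x, [/\ x \in s, e x w & ~~ e x u].

(* The bound [size s <= #|V|] is needed for LBFS, whose labels [#|V| - j.+1]
   reverse the order of the positions [j] only below [#|V|]. *)
Record search_rule (L : Type) (lab : seq V -> V -> L) (lt : rel L) : Prop := {
  search_lt_irr : irreflexive lt;
  search_lt_trans : transitive lt;
  search_lab_sub : forall s u w,
    size s <= #|V| -> nbr_sub_in s u w -> ~~ lt (lab s w) (lab s u);
  search_lab_proper : forall s u w,
    size s <= #|V| -> nbr_proper_in s u w -> lt (lab s u) (lab s w);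
  search_lab_cat : forall s s' v,
    {in s', forall y, ~~ e y v} -> lab (s ++ s') v = lab s v
}.

Lemma mem_nbr_positions s v j :
  (j \in nbr_positions s v) = (j < size s) && e (nth v s j) v.
Proof. by rewrite mem_filter mem_iota add0n andbC. Qed.

Lemma nbr_positions_sub s u w :
  nbr_sub_in s u w -> {subset nbr_positions s u <= nbr_positions s w}.
Proof.
move=> sub j; rewrite !mem_nbr_positions => /andP[js ej]; rewrite js.
by rewrite (set_nth_default u w js) sub ?mem_nth.
Qed.

Lemma nbr_positions_proper s u w : nbr_proper_in s u w ->
  exists2 j, j \in nbr_positions s w & j \notin nbr_positions s u.
Proof.
case=> _ [x [xs exw nexu]]; exists (index x s);
by rewrite mem_nbr_positions index_mem xs nth_index.
Qed.

Lemma nbr_positions_sorted s v : sorted ltn (nbr_positions s v).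
Proof. exact/sorted_filter/iota_ltn_sorted/ltn_trans. Qed.

Lemma nbr_positions_cat s s' v :
  {in s', forall y, ~~ e y v} -> nbr_positions (s ++ s') v = nbr_positions s v.
Proof.
move=> nonadj; rewrite /nbr_positions size_cat iotaD filter_cat add0n.
rewrite -[RHS]cats0; congr (_ ++ _).
  by apply: eq_in_filter => j; rewrite mem_iota add0n => /andP[_ js]; rewrite nth_cat js.
apply/eqP; rewrite -[_ == _]negbK -has_filter; apply/hasPn => j.
rewrite mem_iota => /andP[sj js']; rewrite nth_cat ltnNge sj /=.
by apply/nonadj/mem_nth; rewrite -(ltn_add2l (size s)) subnKC.
Qed.

Lemma nbr_positions_size s v : size (nbr_positions s v) = count (e^~ v) s.
Proof. by rewrite size_filter -[in RHS](mkseq_nth v s) count_map. Qed.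

Lemma mns_rule : search_rule (mns_label e) Defs.proper_sub.
Proof.
have labE s v : mns_label e s v = map succn (nbr_positions s v) by [].
split.
- by move=> a; rewrite /Defs.proper_sub; case: all.
- move=> b a c /andP[/allP ab nba] /andP[/allP bc ncb]; apply/andP; split.
    by apply/allP => x /ab /bc.
  by apply: contra nba => /allP ca; apply/allP => x /bc /ca.
- move=> s u w _ /nbr_positions_sub sub; rewrite /Defs.proper_sub !labE negb_and negbK.
  by apply/orP; right; apply/allP; apply: sub_map.
- move=> s u w _ prop; have [j jw ju] := nbr_positions_proper prop.
  rewrite /Defs.proper_sub !labE; apply/andP; split.
    by apply/allP; apply/sub_map/nbr_positions_sub; case: prop.
  apply/allPn; exists j.+1; first exact: map_f.
  by rewrite /= mem_map //; apply: succn_inj.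
- by move=> s s' v nonadj; rewrite !labE nbr_positions_cat.
Qed.

Lemma mcs_rule : search_rule (mcs_label e) (fun a b => a < b).
Proof.
have labE s v : mcs_label e s v = size (nbr_positions s v).
  by rewrite nbr_positions_size.
have np_uniq s v : uniq (nbr_positions s v).
  by apply: sorted_uniq (nbr_positions_sorted s v); [apply: ltn_trans | apply: ltnn].
split.
- exact: ltnn.
- exact: ltn_trans.
- move=> s u w _ /nbr_positions_sub sub; rewrite !labE -leqNgt.
  exact: uniq_leq_size.
- move=> s u w _ prop; have [j jw ju] := nbr_positions_proper prop.
  case: prop => /nbr_positions_sub sub _; rewrite !labE.
  apply: (@uniq_leq_size _ (j :: _)); first by rewrite /= ju np_uniq.
  by move=> x /predU1P[->|/sub].
- by move=> s s' v nonadj; rewrite !labE nbr_positions_cat.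
Qed.

Lemma lbfs_rule : search_rule (lbfs_label e) lex_lt.
Proof.
pose g j := #|V| - j.+1.
have labE s v : lbfs_label e s v = map g (nbr_positions s v) by [].
have lab_sorted s v : size s <= #|V| -> sorted gtn (lbfs_label e s v).
  move=> ss; rewrite labE sorted_map.
  have small : all (gtn (size s)) (nbr_positions s v).
    by apply/allP => j; rewrite mem_nbr_positions => /andP[].
  apply: (sub_in_sorted _ small (nbr_positions_sorted s v)) => i j.
  by rewrite !unfold_in /= /g => hi hj hij; lia.
split.
- exact: lex_lt_irr.
- exact: lex_lt_trans.
- move=> s u w ss /nbr_positions_sub sub.
  apply: subset_lex_ltN (lab_sorted _ _ ss) (lab_sorted _ _ ss) _.
  by rewrite !labE; apply: sub_map.
- move=> s u w ss prop; have [j jw ju] := nbr_positions_proper prop.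
  have sub : {subset lbfs_label e s u <= lbfs_label e s w}.
    by rewrite !labE; apply/sub_map/nbr_positions_sub; case: prop.
  have gjw : g j \in lbfs_label e s w by rewrite labE map_f.
  have gju : g j \notin lbfs_label e s u.
    rewrite labE; apply/mapP => -[i iu]; move: (iu) (jw).
    rewrite !mem_nbr_positions /g => /andP[? _] /andP[? _] gij.
    have eij : i = j by lia.
    by move: ju; rewrite -eij iu.
  exact: proper_subset_lex_lt (lab_sorted _ _ ss) (lab_sorted _ _ ss) sub gjw gju.
- by move=> s s' v nonadj; rewrite !labE nbr_positions_cat.
Qed.

Lemma ldfs_rule : search_rule (ldfs_label e) lex_lt.
Proof.
have labE s v : ldfs_label e s v = rev (map succn (nbr_positions s v)) by [].
have lab_sorted s v : sorted gtn (ldfs_label e s v).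
  rewrite labE rev_sorted sorted_map.
  by apply: sub_sorted (nbr_positions_sorted s v) => i j /=; lia.
have lab_sub s u w : nbr_sub_in s u w -> {subset ldfs_label e s u <= ldfs_label e s w}.
  by move=> /nbr_positions_sub sub x; rewrite !labE !mem_rev; apply: sub_map.
split.
- exact: lex_lt_irr.
- exact: lex_lt_trans.
- move=> s u w _ /lab_sub sub; exact: subset_lex_ltN.
- move=> s u w _ prop; have [j jw ju] := nbr_positions_proper prop.
  apply: (proper_subset_lex_lt (x := j.+1)) (lab_sorted _ _) (lab_sorted _ _) _ _ _.
  + by apply: lab_sub; case: prop.
  + by rewrite labE mem_rev map_f.
  + by rewrite labE mem_rev mem_map //; apply: succn_inj.
- by move=> s s' v nonadj; rewrite !labE nbr_positions_cat.
Qed.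

End SearchRules.

Lemma last_filterP (T : eqType) (a : pred T) (s : seq T) p : uniq s ->
  ohead (rev (filter a s)) = Some p <->
  [/\ p \in s, a p & {in s, forall y, a y -> index y s <= index p s}].
Proof.
elim/last_ind: s => [|s z IH]; first by split => [|[]].
rewrite rcons_uniq => /andP[zs us].
have idx y : index y (rcons s z) = if y \in s then index y s else size s + (z != y).
  by rewrite -cats1 index_cat; case: (y \in s) => //=; case: eqP.
rewrite filter_rcons; case az: (a z).
- rewrite rev_rcons; split => [[<-]|[ps ap maxp]].
    split => //; first by rewrite mem_rcons mem_head.
    move=> y; rewrite mem_rcons inE => /predU1P[->|ys] _; rewrite !idx (negbTE zs) //.
    by rewrite ys eqxx addn0 index_size.
  have := maxp z; rewrite mem_rcons mem_head !idx (negbTE zs) eqxx addn0 => /(_ isT az).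
  move: ps; rewrite mem_rcons inE => /predU1P[-> //|ps].
  by rewrite ps leqNgt index_mem ps.
- rewrite IH //; split => [[ps ap maxp]|[ps ap maxp]].
    split => //; first by rewrite mem_rcons inE ps orbT.
    move=> y; rewrite mem_rcons inE => /predU1P[->|ys ay]; first by rewrite az.
    by rewrite !idx ys ps maxp.
  have ps' : p \in s.
    by move: ps; rewrite mem_rcons inE => /predU1P[pz|//]; move: ap; rewrite pz az.
  split => // y ys ay; have := maxp y; rewrite mem_rcons inE ys orbT => /(_ isT ay).
  by rewrite !idx ys ps'.
Qed.

Definition undominated (V : finType) (e : rel V) (sigma : seq V) : Prop :=
  forall i, 0 < i < size sigma -> forall u, u \in drop i sigma ->
    ~ nbr_proper_in e (take i sigma) (nth u sigma i) u.

Lemma search_ordering_undominated (V : finType) (e : rel V) (L : Type)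
    (lab : seq V -> V -> L) (lt : rel L) sigma :
  search_rule e lab lt -> search_ordering lab lt sigma -> undominated e sigma.
Proof.
move=> rule [/andP[_ /eqP size_sigma] maximal] i hi u ui prop.
have := maximal i hi u ui; rewrite (search_lab_proper rule) //.
by rewrite size_take -size_sigma; case: ifP => // /ltnW.
Qed.

Lemma vertex_ordering_mem (V : finType) (sigma : seq V) :
  is_vertex_ordering sigma -> forall x, x \in sigma.
Proof.
case/andP=> uniq_sigma /eqP size_sigma x; apply: contraT => xNsigma.
have /card_uniqP card_x : uniq (x :: sigma) by rewrite /= xNsigma uniq_sigma.
by have := max_card (mem (x :: sigma)); rewrite card_x /= size_sigma ltnn.
Qed.

Section VertexOrdering.
Variables (V : finType) (sigma : seq V).
Hypotheses (sigma_uniq : uniq sigma) (sigma_all : forall x, x \in sigma).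

Local Notation pos x := (index x sigma).

Lemma pos_inj : injective (index^~ sigma).
Proof. by move=> x y; apply: index_inj; rewrite ?sigma_all. Qed.

Lemma pos_lt x : pos x < size sigma.
Proof. by rewrite index_mem. Qed.

Lemma mem_take_pos i x : (x \in take i sigma) = (pos x < i).
Proof. exact: in_take. Qed.

Lemma pos_nth x0 i : i < size sigma -> pos (nth x0 sigma i) = i.
Proof. by move=> hi; rewrite index_uniq. Qed.

Lemma sorted_pos : sorted (fun x y => pos x < pos y) sigma.
Proof.
case E: sigma => [//|x0 s]; rewrite -E; apply/(sortedP x0) => i hi.
by rewrite !pos_nth // ltnW.
Qed.

Lemma ltree_parentP (e : rel V) x p : ltree_parent e sigma x = Some p <->
  [/\ pos p < pos x, e x p & forall y, pos y < pos x -> e x y -> pos y <= pos p].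
Proof.
have idx k y : y \in take k sigma -> index y (take k sigma) = pos y.
  by move=> yt; rewrite -{2}(cat_take_drop k sigma) index_cat yt.
rewrite /ltree_parent last_filterP ?take_uniq // mem_take_pos.
split=> -[px exp maxp]; split=> // y; rewrite ?mem_take_pos => yx exy.
- have := maxp y; rewrite !idx ?mem_take_pos //; exact.
- by rewrite !idx ?mem_take_pos // maxp.
Qed.

Lemma ltree_parent_none (e : rel V) x :
  (forall y, pos y < pos x -> ~~ e x y) -> ltree_parent e sigma x = None.
Proof.
move=> nonadj; rewrite /ltree_parent (eq_in_filter (a2 := pred0)) ?filter_pred0 //.
by move=> y; rewrite mem_take_pos => /nonadj/negbTE.
Qed.

Lemma ltree_parent_exists (e : rel V) x y : pos y < pos x -> e x y ->
  exists p, ltree_parent e sigma x = Some p.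
Proof.
move=> yx exy; rewrite /ltree_parent.
have : y \in rev [seq y <- take (pos x) sigma | e x y].
  by rewrite mem_rev mem_filter exy mem_take_pos.
by case: rev => [//|p l] _; exists p.
Qed.

End VertexOrdering.

Lemma connect_cross (T : finType) (e : rel T) (P : pred T) a c :
  connect e a c -> P a -> ~~ P c -> exists x y, [/\ P x, ~~ P y & e x y].
Proof.
move=> /connectP[p pth ->] {c}.
elim: p a pth => [|z p IH] a /=; first by move=> _ ->.
case/andP=> eaz pth Pa nPl; case Pz: (P z); first exact: IH pth Pz nPl.
by exists a, z; rewrite Pz.
Qed.

Section SplitGraph.
Variables (V : finType) (e : rel V) (C I : {set V}).
Hypothesis splitCI : split_partition e C I.

Lemma split_memNC x : (x \notin C) = (x \in I).
Proof.
case: splitCI => CI [CUI _]; apply/idP/idP => [xNC|xI].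
  by have := in_setT x; rewrite -CUI inE (negbTE xNC).
apply: contraT => /negbNE xC.
have : x \in C :&: I by rewrite inE xC xI.
by rewrite CI inE.
Qed.

Lemma split_clique x y : x \in C -> y \in C -> x != y -> e x y.
Proof. by case: splitCI => _ [_ [clique _]]; apply: clique. Qed.

Lemma split_indep_nbr x y : x \in I -> e x y -> y \in C.
Proof.
case: splitCI => _ [_ [_ indep]] xI exy; rewrite -[_ \in C]negbK split_memNC.
by apply: contraL exy; exact: indep.
Qed.

End SplitGraph.

Definition caterpillar_conditions (V : finType) (e t : rel V) (C I L : {set V})
    (P : seq V) : Prop :=
  L :&: [set x in P] = set0 /\ L :|: [set x in P] = setT /\
  is_path t P /\
  (forall w, w \in L -> #|[set y | t w y]| = 1 /\ (exists2 y, y \in P & t w y)) /\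
  C \subset [set x in P] /\
  (forall w i j, w \in L -> i < j < size P ->
     t w (nth w P i) -> ~~ e w (nth w P j)) /\
  (forall (v : V) i, i < size P -> nth v P i = v -> v \in I ->
     (forall x, x \in take i P -> x \in C -> e v x) /\
     (forall x, x \in take (deg e v - #|[set y in take i P] :&: C|) (drop i.+1 P) ->
        e v x)).

Section UndominatedOrdering.
Variables (V : finType) (e : rel V) (C I : {set V}) (sigma : seq V).
Hypotheses (e_sym : symmetric e) (e_irr : forall x, ~~ e x x).
Hypotheses (e_conn : forall x y, connect e x y) (splitCI : split_partition e C I).
Hypotheses (sigma_uniq : uniq sigma) (sigma_all : forall x, x \in sigma).
Hypothesis sigma_undom : undominated e sigma.

Local Notation pos x := (index x sigma).

Lemma undominated_pos b u : 0 < pos b -> pos b <= pos u ->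
  (forall x, pos x < pos b -> e x b -> e x u) ->
  forall x, pos x < pos b -> e x u -> e x b.
Proof.
move=> b_pos bu sub x xb exu; apply: contraT => nexb.
have hb : 0 < pos b < size sigma by rewrite b_pos index_mem sigma_all.
have ud : u \in drop (pos b) sigma by rewrite mem_drop_index.
case: (sigma_undom hb ud); rewrite nth_index //; split.
  by move=> y; rewrite mem_take_pos //; apply: sub.
by exists x; rewrite mem_take_pos.
Qed.

(* Connectivity gives an edge xy from the vertices before b to the others; if b
   had no earlier neighbour, undominatedness of b by y would make xb an edge. *)
Lemma earlier_nbr b : 0 < pos b -> exists2 x, pos x < pos b & e x b.
Proof.
move=> b_pos; have size_pos : 0 < size sigma by case: (sigma) b_pos.
have first_in : pos (nth b sigma 0) < pos b by rewrite pos_nth.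
have [x [y [xb yb exy]]] := connect_cross (P := fun z => pos z < pos b)
  (e_conn (nth b sigma 0) b) first_in (negbT (ltnn _)).
have [z /andP[zb ezb]|no_nbr] := pickP (fun z => (pos z < pos b) && e z b).
  by exists z.
exists x => //; apply: (undominated_pos b_pos _ _ xb exy); first by rewrite leqNgt.
by move=> z zb ezb; have := no_nbr z; rewrite /= zb ezb.
Qed.

Lemma indep_absorbs_later_clique b y a : b \in I -> 0 < pos b -> y \in C ->
  pos b < pos y -> pos a < pos b -> e a y -> e a b.
Proof.
move=> bI b_pos yC by_ ab eay; apply: (undominated_pos b_pos (ltnW by_)) => // x xb exb.
have xC : x \in C by apply: (split_indep_nbr splitCI bI); rewrite e_sym.
apply: (split_clique splitCI xC yC); apply: contraTneq xb => ->.
by rewrite -leqNgt ltnW.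
Qed.

Lemma indep_later_clique_nonadj b y a : b \in I -> 0 < pos b -> y \in C ->
  pos b < pos y -> pos a < pos b -> a \in I -> ~~ e a y.
Proof.
move=> bI b_pos yC by_ ab aI.
apply/negP => /(indep_absorbs_later_clique bI b_pos yC by_ ab).
by case: splitCI => _ [_ [_ indep]]; apply/negP/indep.
Qed.

Lemma between_indep_nbr_clique v c z : v \in I -> e v c ->
  pos v < pos z -> pos z < pos c -> z \in C.
Proof.
move=> vI evc vz zc; rewrite -[_ \in C]negbK (split_memNC splitCI); apply/negP => zI.
have cC := split_indep_nbr splitCI vI evc.
by case/negP: (indep_later_clique_nonadj zI (leq_ltn_trans (leq0n _) vz) cC zc vz vI).
Qed.

Lemma between_indep_nbr_adj v c z : v \in I -> e v c ->
  pos v < pos z -> pos z < pos c -> e v z.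
Proof.
move=> vI evc vz zc; have cC := split_indep_nbr splitCI vI evc.
have z_pos : 0 < pos z by apply: leq_ltn_trans vz.
apply: contraT => nevz.
have [d /and3P[dz edz nedc]|no_d] := pickP (fun d => [&& pos d < pos z, e d z & ~~ e d c]).
  have dI : d \in I.
    rewrite -(split_memNC splitCI); apply: contra nedc => dC.
    apply: (split_clique splitCI dC cC); apply: contraTneq dz => ->.
    by rewrite -leqNgt ltnW.
  case: (ltngtP (pos d) (pos v)) => [dv|vd|/(pos_inj sigma_all) dv].
  - have v_pos : 0 < pos v by apply: leq_ltn_trans dv.
    have zC := between_indep_nbr_clique vI evc vz zc.
    by rewrite (negbTE (indep_later_clique_nonadj vI v_pos zC vz dv dI)) in edz.
  - have d_pos : 0 < pos d by apply: leq_ltn_trans vd.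
    have dc : pos d < pos c by apply: ltn_trans zc.
    by rewrite (negbTE (indep_later_clique_nonadj dI d_pos cC dc vd vI)) in evc.
  - by rewrite -dv edz in nevz.
move: nevz; rewrite (undominated_pos z_pos (ltnW zc) _ vz evc) // => x xz exz.
by apply: contraT => nexc; have := no_d x; rewrite /= xz exz nexc.
Qed.

(* The spine is the dominating path P of the theorem; the other vertices are
   the leaves L. *)
Definition spine x :=
  (pos x == 0) || (x \in C) || [exists y, e x y && (pos x < pos y)].

Lemma nonspine_later_nonadj x y : ~~ spine x -> pos x < pos y -> ~~ e x y.
Proof.
by rewrite /spine !negb_or => /andP[_ /existsPn/(_ y) nexy] xy; rewrite xy andbT in nexy.
Qed.

Lemma nonspine_indep x : ~~ spine x -> x \in I.
Proof. by rewrite /spine !negb_or -(split_memNC splitCI) => /andP[/andP[]]. Qed.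

Lemma nonspine_pos x : ~~ spine x -> 0 < pos x.
Proof. by rewrite /spine !negb_or lt0n => /andP[/andP[]]. Qed.

Lemma spine_clique x : x \in C -> spine x.
Proof. by move=> xC; rewrite /spine xC orbT. Qed.

Lemma spine_indep_later_nbr x : spine x -> x \in I -> 0 < pos x ->
  exists2 c, pos x < pos c & e x c.
Proof.
rewrite /spine -(split_memNC splitCI) lt0n.
case/orP=> [/orP[->//|->//]|/existsP[c /andP[exc xc]]] _ _.
by exists c.
Qed.

Lemma spine_indep_earlier_clique v x : spine v -> v \in I -> x \in C ->
  pos x < pos v -> e v x.
Proof.
move=> sv vI xC xv; have v_pos : 0 < pos v by apply: leq_ltn_trans xv.
have [c vc evc] := spine_indep_later_nbr sv vI v_pos.
have cC := split_indep_nbr splitCI vI evc.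
rewrite e_sym; apply: (indep_absorbs_later_clique vI v_pos cC vc xv).
apply: (split_clique splitCI xC cC); apply: contraTneq xv => ->.
by rewrite -leqNgt ltnW.
Qed.

Lemma first_adj_second x : pos x = 0 -> 1 < size sigma -> e x (nth x sigma 1).
Proof.
move=> x0 two; have pb : pos (nth x sigma 1) = 1 by rewrite pos_nth.
have [x' x'b ex'b] : exists2 x', pos x' < pos (nth x sigma 1) & e x' (nth x sigma 1).
  by apply: earlier_nbr; rewrite pb.
have xx' : x' = x.
  by apply: (pos_inj sigma_all); rewrite x0; move: x'b; rewrite pb; case: (pos x').
by rewrite -{1}xx'.
Qed.

Lemma spine_adj x y : spine x -> spine y -> pos x < pos y ->
  (forall z, pos x < pos z < pos y -> ~~ spine z) -> e x y.
Proof.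
move=> sx sy xy gap; have xNy : x != y by apply: contraTneq xy => ->; rewrite ltnn.
case: (boolP (x \in C)) => [xC|].
  case: (boolP (y \in C)) => [yC|]; first exact: (split_clique splitCI xC yC xNy).
  by rewrite (split_memNC splitCI) e_sym => yI; apply: spine_indep_earlier_clique.
rewrite (split_memNC splitCI) => xI.
have [c xc exc] : exists2 c, pos x < pos c & e x c.
  have [x0|x_pos] := posnP (pos x); last exact: spine_indep_later_nbr.
  have two : 1 < size sigma by have := pos_lt sigma_all y; lia.
  by exists (nth x sigma 1); rewrite ?x0 ?pos_nth ?first_adj_second.
case: (ltngtP (pos c) (pos y)) => [cy|yc|/(pos_inj sigma_all) <- //].
  have := gap c; rewrite xc cy => /(_ isT)/negP; case.
  exact/spine_clique/(split_indep_nbr splitCI xI exc).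
exact: between_indep_nbr_adj xI exc xy yc.
Qed.

Definition spine_path := filter spine sigma.

Definition leaves := [set x | ~~ spine x].

Lemma mem_spine_path x : (x \in spine_path) = spine x.
Proof. by rewrite mem_filter sigma_all andbT. Qed.

Lemma spine_path_sorted : sorted (fun a b => pos a < pos b) spine_path.
Proof.
have tr : transitive (fun a b => pos a < pos b) by move=> ? ? ?; apply: ltn_trans.
exact: (sorted_filter tr spine (sorted_pos sigma_uniq)).
Qed.

Lemma spine_parent k x0 : k.+1 < size spine_path ->
  ltree_parent e sigma (nth x0 spine_path k.+1) = Some (nth x0 spine_path k).
Proof.
move=> hk; set x := nth x0 spine_path k; set y := nth x0 spine_path k.+1.
have [xP yP] : x \in spine_path /\ y \in spine_path by rewrite !mem_nth // ltnW.
have xy : pos x < pos y by rewrite (key_ltn_nth spine_path_sorted) // ltnW.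
have gap z : pos x < pos z -> pos z < pos y -> ~~ spine z.
  move=> xz zy; rewrite -mem_spine_path; apply/negP => zP.
  exact: (key_nth_gap spine_path_sorted hk zP xz zy).
apply/(ltree_parentP sigma_uniq sigma_all); split => //.
  by rewrite e_sym; apply: spine_adj; rewrite -?mem_spine_path // => z /andP[]; apply: gap.
move=> z zy eyz; rewrite leqNgt; apply/negP => xz.
by rewrite e_sym (negbTE (nonspine_later_nonadj (gap z xz zy) zy)) in eyz.
Qed.

Variable t : rel V.
Hypothesis t_ltree : forall x y, t x y = ltree e sigma x y.

Lemma spine_path_is_path : 0 < size sigma -> is_path t spine_path.
Proof.
case E: sigma => [//|x0 s] _.
have x0P : x0 \in spine_path by rewrite mem_spine_path /spine E /= eqxx.
have : sorted t spine_path.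
  apply/(sortedP x0) => k hk; rewrite t_ltree /ltree.
  by rewrite (spine_parent _ hk) eqxx orbT.
rewrite /is_path (key_sorted_uniq spine_path_sorted).
by case: spine_path x0P.
Qed.

Lemma leaf_edge w y : ~~ spine w -> t w y = (ltree_parent e sigma w == Some y).
Proof.
move=> wL; rewrite t_ltree /ltree.
case: (ltree_parent e sigma y =P Some w) => [|_]; last by rewrite orbF.
case/(ltree_parentP sigma_uniq sigma_all) => wy eyw _.
by rewrite e_sym (negbTE (nonspine_later_nonadj wL wy)) in eyw.
Qed.

Lemma leaf_parent w : ~~ spine w ->
  exists2 p, ltree_parent e sigma w = Some p & p \in C.
Proof.
move=> wL; have [x xw exw] := earlier_nbr (nonspine_pos wL).
have ewx : e w x by rewrite e_sym.
have [p wp] := ltree_parent_exists sigma_all xw ewx.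
exists p => //; case/(ltree_parentP sigma_uniq sigma_all): wp => _ ewp _.
exact: (split_indep_nbr splitCI (nonspine_indep wL) ewp).
Qed.

Lemma leaf_unique_nbr w : w \in leaves ->
  #|[set y | t w y]| = 1 /\ exists2 y, y \in spine_path & t w y.
Proof.
rewrite inE => wL; have [p wp pC] := leaf_parent wL.
have -> : [set y | t w y] = [set p].
  by apply/setP => y; rewrite !inE leaf_edge // wp eq_sym.
split; first exact: cards1.
by exists p; rewrite ?mem_spine_path ?spine_clique // leaf_edge // wp.
Qed.

Lemma leaf_later_nonadj w i j : w \in leaves -> i < j < size spine_path ->
  t w (nth w spine_path i) -> ~~ e w (nth w spine_path j).
Proof.
rewrite inE => wL /andP[ij jP]; have iP := ltn_trans ij jP.
rewrite leaf_edge // => /eqP/(ltree_parentP sigma_uniq sigma_all)[pw ewp maxp].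
have ji : pos (nth w spine_path i) < pos (nth w spine_path j).
  by rewrite (key_ltn_nth spine_path_sorted).
have spine_j : spine (nth w spine_path j) by rewrite -mem_spine_path mem_nth.
case: (ltngtP (pos (nth w spine_path j)) (pos w)) => [jw|wj|/(pos_inj sigma_all) jw].
- by apply/negP => /(maxp _ jw); rewrite leqNgt ji.
- exact: nonspine_later_nonadj.
- by rewrite jw (negbTE wL) in spine_j.
Qed.

Lemma indep_spine_prefix_nbr v i x : i < size spine_path ->
  nth v spine_path i = v -> v \in I -> x \in take i spine_path -> x \in C -> e v x.
Proof.
move=> iP vi vI xi xC; have sv : spine v by rewrite -mem_spine_path -vi mem_nth.
have iv : index v spine_path = i.
  by rewrite -{1}vi index_uniq ?(key_sorted_uniq spine_path_sorted).
apply: spine_indep_earlier_clique => //.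
have xP : x \in spine_path by rewrite mem_spine_path spine_clique.
have vP : v \in spine_path by rewrite -vi mem_nth.
by rewrite (key_ltn_index spine_path_sorted xP vP) iv -in_take.
Qed.

(* The neighbours of v are clique vertices, hence on the spine; if v missed x,
   those after v would all precede x, leaving v fewer than deg v neighbours. *)
Lemma indep_spine_suffix_nbr v i x : i < size spine_path ->
  nth v spine_path i = v -> v \in I ->
  x \in take (deg e v - #|[set y in take i spine_path] :&: C|) (drop i.+1 spine_path) ->
  e v x.
Proof.
set P := spine_path; set A := [set y in take i P] :&: C; set D := drop i.+1 P.
move=> iP vi vI xm; have xD := mem_take xm; have xP := mem_drop xD.
have P_uniq : uniq P := key_sorted_uniq spine_path_sorted.
have vP : v \in P by rewrite -vi mem_nth.
have iv : index v P = i by rewrite -{1}vi index_uniq.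
have ix : i < index x P by rewrite -(mem_drop_index _ P_uniq).
have vx : pos v < pos x by rewrite (key_ltn_index spine_path_sorted vP xP) iv.
apply: contraT => nevx.
have sub : [set y | e v y] \subset A :|: [set y in take (index x D) D].
  apply/subsetP => y; rewrite inE => evy; have yC := split_indep_nbr splitCI vI evy.
  have yP : y \in P by rewrite mem_spine_path spine_clique.
  rewrite !inE yC andbT (in_take _ yP).
  case: (ltngtP (index y P) i) => [//|iy|yv]; last first.
    have y_v : y = v by apply: (index_inj y yP vP); rewrite /= iv.
    by rewrite y_v (negbTE (e_irr v)) in evy.
  have yD : y \in D by rewrite (mem_drop_index _ P_uniq).
  rewrite (in_take _ yD) !index_drop //.
  case: (ltngtP (index y P) (index x P)) => [yx|xy|/(index_inj y yP xP) y_x].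
  - exact: ltn_sub2r (leq_ltn_trans iy yx) yx.
  - have := between_indep_nbr_adj vI evy vx; rewrite (negbTE nevx).
    by rewrite (key_ltn_index spine_path_sorted xP yP) => /(_ xy).
  - by rewrite -y_x evy in nevx.
have deg_le : deg e v <= #|A| + index x D.
  apply: leq_trans (subset_leq_card sub) (leq_trans (leq_card_setU _ _) _).
  by rewrite leq_add2l cardsE (leq_trans (card_size _)) // size_take_min geq_minl.
have : index x D < deg e v - #|A| by rewrite -in_take.
by rewrite ltn_subRL ltnNge deg_le.
Qed.

Lemma undominated_caterpillar :
  0 < size sigma -> exists L P, caterpillar_conditions e t C I L P.
Proof.
move=> sigma_pos; exists leaves, spine_path.
split; [|split; [|split; [|split; [|split; [|split]]]]].
- by apply/setP => x; rewrite !inE mem_spine_path andNb.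
- by apply/setP => x; rewrite !inE mem_spine_path orNb.
- exact: spine_path_is_path.
- exact: leaf_unique_nbr.
- by apply/subsetP => x xC; rewrite inE mem_spine_path spine_clique.
- exact: leaf_later_nonadj.
- move=> v i iP vi vI; split => x.
    exact: indep_spine_prefix_nbr.
  exact: indep_spine_suffix_nbr.
Qed.

End UndominatedOrdering.

Section Caterpillar.
Variables (V : finType) (e t : rel V) (C I L : {set V}) (P : seq V).
Hypotheses (e_sym : symmetric e) (splitCI : split_partition e C I).
Hypotheses (t_sym : symmetric t) (t_irr : forall x, ~~ t x x).
Hypotheses (t_sub : forall x y, t x y -> e x y) (t_acyclic : acyclic t).
Hypotheses (LP_disj : L :&: [set x in P] = set0) (LP_cover : L :|: [set x in P] = setT).
Hypothesis P_path : is_path t P.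
Hypothesis L_leaf :
  forall w, w \in L -> #|[set y | t w y]| = 1 /\ exists2 y, y \in P & t w y.
Hypothesis C_sub_P : C \subset [set x in P].
Hypothesis L_nonadj : forall w i j, w \in L -> i < j < size P ->
  t w (nth w P i) -> ~~ e w (nth w P j).
Hypothesis P_indep : forall (v : V) i, i < size P -> nth v P i = v -> v \in I ->
  (forall x, x \in take i P -> x \in C -> e v x) /\
  (forall x, x \in take (deg e v - #|[set y in take i P] :&: C|) (drop i.+1 P) -> e v x).

Lemma P_uniq : uniq P.
Proof. by case: P P_path => // x P' /andP[]. Qed.

Lemma P_nonempty : 0 < size P.
Proof. by case: P P_path. Qed.

Lemma P_edge x0 k : k.+1 < size P -> t (nth x0 P k) (nth x0 P k.+1).
Proof. by case: P P_path => [//|x P'] /andP[_ /(pathP x0)]; apply. Qed.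

Lemma memP_L x : (x \in P) = (x \notin L).
Proof.
have : x \notin L :&: [set x in P] by rewrite LP_disj inE.
have : x \in L :|: [set x in P] by rewrite LP_cover inE.
by rewrite !inE; case: (x \in L); case: (x \in P).
Qed.

Lemma clique_on_path x : x \in C -> x \in P.
Proof. by move/(subsetP C_sub_P); rewrite inE. Qed.

Lemma leaf_indep x : x \in L -> x \in I.
Proof.
move=> xL; rewrite -(split_memNC splitCI); apply: contraL xL => /clique_on_path.
by rewrite memP_L.
Qed.

Lemma P_sorted : sorted t P.
Proof. by case: P P_path => // x P' /andP[]. Qed.

Lemma path_no_chord x0 a b : a.+1 < b -> b < size P -> ~~ t (nth x0 P a) (nth x0 P b).
Proof.
move=> ab bP; apply/negP => tab; have aP : a < size P by lia.
set x := nth x0 P a; set p := take (b - a) (drop a.+1 P).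
have size_p : size p = b - a by rewrite size_takel // size_drop; lia.
have last_p : last x p = nth x0 P b.
  rewrite (last_nth x0) size_p; case E: (b - a) => [|k] /=; first lia.
  by rewrite nth_take ?nth_drop; [congr nth; lia | lia].
have c_uniq : uniq (x :: p).
  by have := take_uniq (b - a).+1 (drop_uniq a P_uniq); rewrite (drop_nth x0 aP).
have c_size : 3 <= size (x :: p) by rewrite /= size_p; lia.
case/negP: (t_acyclic c_uniq c_size).
rewrite /= rcons_path last_p t_sym tab andbT take_path //.
by have := drop_sorted a P_sorted; rewrite (drop_nth x0 aP).
Qed.

(* Otherwise (3a), (3b) and y would give v more than deg v neighbours. *)
Lemma indep_later_nbr_index v h y : h < size P -> nth v P h = v -> v \in I ->
  y \in drop h.+1 P -> e v y ->
  index y (drop h.+1 P) < deg e v - #|[set z in take h P] :&: C|.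
Proof.
set A := [set z in take h P] :&: C; set D := drop h.+1 P; set m := deg e v - #|A|.
move=> hP vh vI yD evy; have [prefix suffix] := P_indep hP vh vI.
rewrite ltnNge; apply/negP => my.
have D_uniq : uniq D := drop_uniq _ P_uniq.
have disj z : z \in take h P -> z \notin D.
  move=> /index_ltn zh; apply/negP => zD; have zP := mem_drop zD.
  by move: zD; rewrite /D (mem_drop_index _ P_uniq zP) leqNgt ltnS ltnW.
have B_card : #|[set z in take m D]| = m.
  rewrite cardsE (card_uniqP (take_uniq _ D_uniq)) size_takel //.
  by apply: leq_trans my (ltnW _); rewrite index_mem.
have AB : A :&: [set z in take m D] = set0.
  apply/setP => z; rewrite !inE; apply/negbTE; apply/negP => /andP[/andP[/disj zD _]].
  by move/mem_take; apply/negP.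
have yAB : y \notin A :|: [set z in take m D].
  rewrite !inE negb_or (in_take _ yD) -leqNgt my andbT negb_and.
  by apply/orP; left; apply: contraL yD; apply: disj.
have sub : y |: (A :|: [set z in take m D]) \subset [set z | e v z].
  apply/subsetP => z; rewrite !inE => /predU1P[->//|/orP[/andP[]|]].
    exact: prefix.
  exact: suffix.
have A_sub : A \subset [set z | e v z].
  by apply/subsetP => z; rewrite !inE => /andP[]; apply: prefix.
have := subset_leq_card sub; rewrite cardsU1 yAB cardsU AB cards0 subn0 B_card.
by rewrite -/(deg e v) /m subnKC ?(subset_leq_card A_sub) // add1n ltnn.
Qed.

Lemma leaf_nbr_unique w y p : w \in L -> t w y -> t w p -> y = p.
Proof.
move=> /L_leaf[/eqP/cards1P[z Ez] _] twy twp.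
have : y \in [set y | t w y] by rewrite inE.
have : p \in [set y | t w y] by rewrite inE.
by rewrite Ez !inE => /eqP -> /eqP ->.
Qed.

Variables (Lab : Type) (lab : seq V -> V -> Lab) (lt : rel Lab).
Hypothesis rule : search_rule e lab lt.

Section GreedyLeaves.
Variable l : seq V.
Hypothesis l_perm : perm_eq (enum L) l.

Local Notation sigma := (P ++ l).

Lemma mem_leaves x : (x \in l) = (x \in L).
Proof. by rewrite -(perm_mem l_perm) mem_enum. Qed.

Lemma sigma_uniq : uniq sigma.
Proof.
have l_uniq : uniq l by rewrite -(perm_uniq l_perm); apply: enum_uniq.
rewrite cat_uniq P_uniq l_uniq andbT /=.
by apply/hasPn => x; rewrite mem_leaves memP_L negbK.
Qed.

Lemma sigma_all x : x \in sigma.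
Proof. by rewrite mem_cat mem_leaves memP_L orNb. Qed.

Lemma sigma_size : size sigma = #|V|.
Proof.
rewrite size_cat -(perm_size l_perm) -cardE -cardsT -LP_cover cardsU LP_disj.
by rewrite cards0 subn0 cardsE (card_uniqP P_uniq) addnC.
Qed.

Lemma pos_path x : x \in P -> index x sigma = index x P.
Proof. by move=> xP; rewrite index_cat xP. Qed.

Lemma pos_leaf w : w \in L -> size P <= index w sigma.
Proof. by move=> wL; rewrite index_cat memP_L wL leq_addr. Qed.

Lemma ltree_parent_path_succ x0 k : k.+1 < size P ->
  ltree_parent e sigma (nth x0 P k.+1) = Some (nth x0 P k).
Proof.
move=> kP; have kP' := ltnW kP; apply/(ltree_parentP sigma_uniq sigma_all).
rewrite !pos_path ?mem_nth // !index_uniq ?P_uniq //.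
by split => //; rewrite e_sym t_sub ?P_edge.
Qed.

Lemma ltree_parent_path_head x0 : ltree_parent e sigma (nth x0 P 0) = None.
Proof.
have hP := P_nonempty; apply: (ltree_parent_none sigma_all) => y.
by rewrite (pos_path (mem_nth x0 hP)) (index_uniq x0 hP P_uniq).
Qed.

Lemma ltree_parent_leaf w p : w \in L -> p \in P -> t w p ->
  ltree_parent e sigma w = Some p.
Proof.
move=> wL pP twp; apply/(ltree_parentP sigma_uniq sigma_all); split.
- by rewrite pos_path //; apply: leq_trans (pos_leaf wL); rewrite index_mem.
- exact: t_sub.
move=> y _ ewy; have yP : y \in P.
  rewrite memP_L; apply: contraL ewy => yL.
  by case: splitCI => _ [_ [_ indep]]; apply: indep; apply: leaf_indep.
rewrite !pos_path // leqNgt; apply/negP => py.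
have := L_nonadj (i := index p P) (j := index y P) wL; rewrite py index_mem yP.
by rewrite !nth_index // twp ewy => /(_ isT isT).
Qed.

Lemma ltree_parent_tree x y : ltree_parent e sigma x = Some y -> t x y.
Proof.
case: (boolP (x \in L)) => [xL|].
  have [_ [p pP txp]] := L_leaf xL.
  by rewrite (ltree_parent_leaf xL pP txp) => -[<-].
rewrite -memP_L => xP; rewrite -(nth_index x xP); case E: (index x P) => [|k].
  by rewrite ltree_parent_path_head.
have kP : k.+1 < size P by rewrite -E index_mem.
by rewrite ltree_parent_path_succ // => -[<-]; rewrite t_sym P_edge.
Qed.

Lemma leaf_edge_parent w y : w \in L -> t w y -> ltree_parent e sigma w = Some y.
Proof.
move=> wL twy; have [_ [p pP twp]] := L_leaf wL.
by rewrite (leaf_nbr_unique wL twy twp); apply: ltree_parent_leaf.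
Qed.

Lemma path_edge_parent x y : x \in P -> y \in P -> index y P < index x P -> t x y ->
  ltree_parent e sigma x = Some y.
Proof.
move=> xP yP yx txy; have xy1 : index x P = (index y P).+1.
  apply/eqP; rewrite eqn_leq yx andbT leqNgt; apply: contraL txy => chord.
  by rewrite t_sym -{1}(nth_index x yP) -{2}(nth_index x xP) path_no_chord ?index_mem.
by rewrite -(nth_index x xP) xy1 ltree_parent_path_succ ?nth_index // -xy1 index_mem.
Qed.

Lemma tree_ltree x y : t x y -> ltree e sigma x y.
Proof.
move=> txy; have tyx : t y x by rewrite t_sym.
rewrite /ltree; case: (boolP (x \in L)) => [xL|].
  by rewrite (leaf_edge_parent xL txy) eqxx.
case: (boolP (y \in L)) => [yL|]; first by rewrite (leaf_edge_parent yL tyx) eqxx orbT.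
rewrite -!memP_L => yP xP.
case: (ltngtP (index x P) (index y P)) => [xy|yx|/(index_inj x xP yP) exy].
- by rewrite (path_edge_parent yP xP xy tyx) eqxx orbT.
- by rewrite (path_edge_parent xP yP yx txy) eqxx.
- by rewrite exy (negbTE (t_irr y)) in txy.
Qed.

Lemma caterpillar_ltree x y : t x y = ltree e sigma x y.
Proof.
apply/idP/idP => [|/orP[]/eqP]; first exact: tree_ltree.
  exact: ltree_parent_tree.
by move/ltree_parent_tree; rewrite t_sym.
Qed.

(* For x in I, u is a clique vertex after w on P, and by the degree count of
   indep_later_nbr_index condition (3b) for x reaches w. *)
Lemma path_vertex_dominates i u : i < size P -> u \in drop i sigma ->
  nbr_sub_in e (take i P) u (nth u P i).
Proof.
move=> iP ud x xi exu; set w := nth u P i.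
have xP := mem_take xi; have xw : index x P < i by rewrite -in_take.
have wP : w \in P := mem_nth u iP; have iw : index w P = i := index_uniq u iP P_uniq.
have [xC|] := boolP (x \in C).
  have [wC|] := boolP (w \in C).
    by apply: (split_clique splitCI xC wC); apply: contraTneq xw => ->; rewrite iw ltnn.
  rewrite (split_memNC splitCI) e_sym => wI.
  have wi : nth w P i = w := set_nth_default u w iP.
  exact: (P_indep iP wi wI).1 x xi xC.
rewrite (split_memNC splitCI) => xI.
have uP := clique_on_path (split_indep_nbr splitCI xI exu).
have ui : i <= index u P.
  move: ud; rewrite drop_cat iP mem_cat mem_leaves -(negbK (u \in L)) -memP_L uP orbF.
  by rewrite (mem_drop_index _ P_uniq uP).
have [<- //|uw] := eqVneq u w.
have iu : i < index u P.
  rewrite ltn_neqAle ui andbT; apply: contra uw => /eqP iu.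
  by rewrite /w iu nth_index.
have hP : index x P < size P by rewrite index_mem.
have xh : nth x P (index x P) = x := nth_index x xP.
have xu : (index x P).+1 < index u P := leq_ltn_trans xw iu.
have uD : u \in drop (index x P).+1 P by rewrite (mem_drop_index _ P_uniq uP) ltnW.
have wD : w \in drop (index x P).+1 P by rewrite (mem_drop_index _ P_uniq wP) iw.
have := indep_later_nbr_index hP xh xI uD exu; rewrite (index_drop (ltnW xu)) => bound.
apply: (P_indep hP xh xI).2; rewrite (in_take _ wD) index_drop iw //.
exact: leq_trans (ltn_sub2r xu iu) (ltnW bound).
Qed.

Hypothesis l_greedy : forall i, i < size l ->
  forall u, u \in drop i l -> ~~ lt (lab P (nth u l i)) (lab P u).

Lemma caterpillar_search_ordering : search_ordering lab lt sigma.
Proof.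
split; first by rewrite /is_vertex_ordering sigma_uniq sigma_size eqxx.
move=> i /andP[_ isz] u ud; have size_take_i : size (take i sigma) <= #|V|.
  by rewrite size_take -sigma_size; case: ifP => // /ltnW.
have [iP|Pi] := ltnP i (size P).
  move: size_take_i; rewrite take_cat iP nth_cat iP => size_take_i.
  exact: (search_lab_sub rule size_take_i (path_vertex_dominates iP ud)).
move: ud; rewrite take_cat ltnNge Pi nth_cat ltnNge Pi /= drop_cat ltnNge Pi /=.
set k := i - size P => ud; have kl : k < size l by rewrite /k ltn_subLR // -size_cat.
have leaves_nonadj v : v \in L -> {in take k l, forall y, ~~ e y v}.
  move=> vL y /mem_take; rewrite mem_leaves => yL.
  by case: splitCI => _ [_ [_ indep]]; apply: indep; apply: leaf_indep.
have uL : u \in L by rewrite -mem_leaves (mem_drop ud).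
have wL : nth u l k \in L by rewrite -mem_leaves mem_nth.
rewrite (search_lab_cat rule _ (leaves_nonadj _ wL)).
rewrite (search_lab_cat rule _ (leaves_nonadj _ uL)).
exact: l_greedy.
Qed.

End GreedyLeaves.

Lemma caterpillar_search_ltree : exists sigma,
  search_ordering lab lt sigma /\ forall x y, t x y = ltree e sigma x y.
Proof.
have [l l_perm l_greedy] :=
  exists_greedy_order (lab P) (search_lt_irr rule) (search_lt_trans rule) (enum L).
exists (P ++ l); split; first exact: caterpillar_search_ordering.
exact: caterpillar_ltree.
Qed.

End Caterpillar.

Lemma search_ltree_caterpillar (V : finType) (e t : rel V) (C I : {set V})
    (Lab : Type) (lab : seq V -> V -> Lab) (lt : rel Lab) :
  search_rule e lab lt -> simple_graph e -> connected e ->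
  split_partition e C I -> spanning_tree e t ->
  (exists sigma, search_ordering lab lt sigma /\ forall x y, t x y = ltree e sigma x y)
  <-> exists L P, caterpillar_conditions e t C I L P.
Proof.
move=> rule [e_sym e_irr] [V_pos e_conn] splitCI [[t_sym t_irr] [t_sub [_ t_acyclic]]].
split=> [[sigma [ord t_ltree]]|[L [P [LP_disj [LP_cover [P_path cat]]]]]].
  have [sigma_ordering _] := ord.
  have /andP[sigma_uniq /eqP size_sigma] := sigma_ordering.
  apply: (undominated_caterpillar e_sym e_irr e_conn splitCI sigma_uniq
    (vertex_ordering_mem sigma_ordering) (search_ordering_undominated rule ord) t_ltree).
  by rewrite size_sigma.
case: cat => L_leaf [C_sub_P [L_nonadj P_indep]].
exact: (caterpillar_search_ltree e_sym splitCI t_sym t_irr t_sub t_acyclic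
  LP_disj LP_cover P_path L_leaf C_sub_P L_nonadj P_indep rule).
Qed.

Theorem theorem5 (V : finType) (e : rel V) (C I : {set V}) (t : rel V)
    (X : search) :
  simple_graph e -> connected e -> split_partition e C I ->
  spanning_tree e t ->
  (exists sigma : seq V,
      is_search_ordering e X sigma /\ (forall x y, t x y = ltree e sigma x y))
  <->
  (exists (L : {set V}) (P : seq V),
      (* partition V = L u V(P), P a path of T *)
      L :&: [set x in P] = set0 /\ L :|: [set x in P] = setT /\
      is_path t P /\
      (* (1) T is a caterpillar with leaves L and dominating path P, C in P *)
      (forall w, w \in L -> #|[set y | t w y]| = 1 /\
                            (exists2 y, y \in P & t w y)) /\
      C \subset [set x in P] /\
      (* (2) *)
      (forall w i j, w \in L -> i < j < size P ->
         t w (nth w P i) -> ~~ e w (nth w P j)) /\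
      (* (3) ; index i is 0-based here, so {v_1..v_(i-1)} = take i P *)
      (forall (v : V) i, i < size P -> nth v P i = v -> v \in I ->
         (forall x, x \in take i P -> x \in C -> e v x) /\
         (forall x, x \in take (deg e v - #|[set y in take i P] :&: C|)
                              (drop i.+1 P) -> e v x))).
Proof.
case: X; apply: search_ltree_caterpillar.
- exact: mns_rule.
- exact: mcs_rule.
- exact: ldfs_rule.
- exact: lbfs_rule.
Qed.
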